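(* Let $G=(V,E)$ be an undirected graph with $m$ edges and positive capacities $u_e$, let $0<\epsilon<1/7$, $\rho>0$, $F>0$, and let $w\in\mathbb{R}_{>0}^E$ with $\mu=\sum_e w_e$. Set $r_e=w_e/u_e^2$ and suppose $R_{\mathrm{eff}}(r)\le(1-7\epsilon)\mu/F^2$. Let $\tilde f$ be an $s$-$t$ flow of value $F$ with $\mathcal{E}_r(\tilde f)\le(1+\epsilon^2)F^2R_{\mathrm{eff}}(r)$. Define $w'_e=w_e+\frac{\epsilon}{\rho}\,\mathrm{cong}_{\tilde f}(e)\,w_e+\frac{\epsilon^2}{m\rho}\mu$ and $\mu'=\sum_e w'_e$. Then $\mu'\le\mu\exp\!\big(\frac{\epsilon(1-2\epsilon)}{\rho}\big)$.
   Context: Edges are arbitrarily oriented; an $s$-$t$ flow is $f:E\to\mathbb{R}$ conserving flow at all vertices other than $s,t$, with value the net flow out of $s$. $\mathrm{cong}_f(e)=|f(e)|/u_e$. $\mathcal{E}_r(f)=\sum_e r_e f(e)^2$. The effective $s$-$t$ resistance $R_{\mathrm{eff}}(r)$ is the minimum of $\mathcal{E}_r$ over $s$-$t$ flows of value $1$, so the electrical flow of value $F$ has energy $F^2R_{\mathrm{eff}}(r)$. *)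

From Stdlib Require Import Reals List.
Import ListNotations.
Open Scope R_scope.

(* A finite undirected multigraph with vertices 0..n-1 and edges 0..m-1;
   edge i is (arbitrarily) oriented from [tl i] to [hd i]. *)

Definition sumE (m : nat) (g : nat -> R) : R :=
  fold_right Rplus 0 (map g (seq 0 m)).

Definition netout (m : nat) (tl hd : nat -> nat) (f : nat -> R) (v : nat) : R :=
  sumE m (fun i => (if Nat.eqb (tl i) v then f i else 0)
                 - (if Nat.eqb (hd i) v then f i else 0)).

Definition is_st_flow (n m : nat) (tl hd : nat -> nat) (s t : nat)
    (f : nat -> R) (F : R) : Prop :=
  (forall v, (v < n)%nat -> v <> s -> v <> t -> netout m tl hd f v = 0) /\
  netout m tl hd f s = F.

Definition energy (m : nat) (r f : nat -> R) : R :=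
  sumE m (fun i => r i * (f i)^2).

Definition cong (u f : nat -> R) (i : nat) : R := Rabs (f i) / u i.

Definition is_Reff (n m : nat) (tl hd : nat -> nat) (s t : nat)
    (r : nat -> R) (Reff : R) : Prop :=
  (exists f, is_st_flow n m tl hd s t f 1 /\ energy m r f = Reff) /\
  (forall f, is_st_flow n m tl hd s t f 1 -> Reff <= energy m r f).

(* Only the energy bound on the flow matters.  Writing x_e for the congestion,
   E_r(f~) = sum_e w_e x_e^2 and the hypotheses give sum_e w_e x_e^2 <= c^2 mu with
   c = 1 - 3 eps, because (1 + eps^2)(1 - 7 eps) <= (1 - 3 eps)^2.  Pointwise AM-GM,
   2 c x <= c^2 + x^2, then yields sum_e w_e x_e <= c mu, so
   mu' <= mu (1 + eps (1 - 3 eps)/rho + eps^2/rho) = mu (1 + eps (1 - 2 eps)/rho),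
   and 1 + y <= exp y concludes. *)
From Stdlib Require Import Reals List Lra Lia Psatz.
Open Scope R_scope.

Lemma sumE_le m f g :
  (forall i, (i < m)%nat -> f i <= g i) -> sumE m f <= sumE m g.
Proof.
  intros H; unfold sumE.
  assert (Hseq : forall i, In i (seq 0 m) -> f i <= g i)
    by (intros i Hi; apply in_seq in Hi; apply H; lia).
  induction (seq 0 m) as [|k l IH]; simpl in *.
  - lra.
  - apply Rplus_le_compat; [apply Hseq | apply IH; intros]; auto.
Qed.

Lemma sumE_ext m f g : (forall i, f i = g i) -> sumE m f = sumE m g.
Proof. intros H; unfold sumE; f_equal; apply map_ext; exact H. Qed.

Lemma sumE_plus m f g : sumE m (fun i => f i + g i) = sumE m f + sumE m g.
Proof.
  unfold sumE; generalize 0%nat as k; induction m as [|m IH]; intros k; simpl.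
  - ring.
  - rewrite IH; ring.
Qed.

Lemma sumE_scal m a f : sumE m (fun i => a * f i) = a * sumE m f.
Proof.
  unfold sumE; generalize 0%nat as k; induction m as [|m IH]; intros k; simpl.
  - ring.
  - rewrite IH; ring.
Qed.

Lemma sumE_const m c : sumE m (fun _ => c) = INR m * c.
Proof.
  unfold sumE; generalize 0%nat as k; induction m as [|m IH]; intros k.
  - simpl; ring.
  - rewrite S_INR; simpl; rewrite IH; ring.
Qed.

Lemma sumE_nonneg m f : (forall i, (i < m)%nat -> 0 <= f i) -> 0 <= sumE m f.
Proof.
  intros H; rewrite <- (Rmult_0_r (INR m)), <- sumE_const.
  apply sumE_le; exact H.
Qed.

Lemma weighted_sum_le_of_weighted_sq_sum_le m (w x : nat -> R) c :
  0 < c -> (forall i, (i < m)%nat -> 0 <= w i) ->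
  sumE m (fun i => w i * x i ^ 2) <= c ^ 2 * sumE m w ->
  sumE m (fun i => w i * x i) <= c * sumE m w.
Proof.
  intros Hc Hw Hsq.
  assert (Hamgm : 2 * c * sumE m (fun i => w i * x i)
                  <= c ^ 2 * sumE m w + sumE m (fun i => w i * x i ^ 2)).
  { rewrite <- !sumE_scal, <- sumE_plus.
    apply sumE_le; intros i Hi.
    pose proof (Hw i Hi); pose proof (pow2_ge_0 (c - x i)).
    nra. }
  nra.
Qed.

Lemma energy_eq_weighted_cong_sq m (u w f : nat -> R) :
  (forall i, (i < m)%nat -> 0 < u i) ->
  energy m (fun i => w i / u i ^ 2) f = sumE m (fun i => w i * cong u f i ^ 2).
Proof.
  intros Hu; unfold energy, sumE.
  f_equal; apply map_ext_in; intros i Hi.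
  apply in_seq in Hi; pose proof (Hu i ltac:(lia)).
  unfold cong; rewrite <- (pow2_abs (f i)); field; lra.
Qed.

Lemma energy_factor_le_sq eps :
  0 <= eps -> (1 + eps ^ 2) * (1 - 7 * eps) <= (1 - 3 * eps) ^ 2.
Proof. intros; nra. Qed.

Lemma sumE_reweight m (w g : nat -> R) a b :
  (0 < m)%nat ->
  sumE m (fun i => w i + a * g i * w i + b / INR m)
  = sumE m w + a * sumE m (fun i => g i * w i) + b.
Proof.
  intros Hm; assert (0 < INR m) by (apply lt_0_INR; exact Hm).
  rewrite !sumE_plus, sumE_const, <- sumE_scal.
  rewrite (sumE_ext m (fun i => a * g i * w i) (fun i => a * (g i * w i)))
    by (intros; ring).
  field; lra.
Qed.

Lemma reweighted_total_le_exp mu S eps rho :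
  0 <= mu -> 0 < eps -> 0 < rho -> S <= (1 - 3 * eps) * mu ->
  mu + eps / rho * S + eps ^ 2 * mu / rho <= mu * exp (eps * (1 - 2 * eps) / rho).
Proof.
  intros Hmu Heps Hrho HS.
  apply Rle_trans with (mu * (1 + eps * (1 - 2 * eps) / rho)).
  - assert (eps / rho * S <= eps / rho * ((1 - 3 * eps) * mu))
      by (apply Rmult_le_compat_l; [apply Rlt_le, Rdiv_lt_0_compat |]; lra).
    replace (mu * (1 + eps * (1 - 2 * eps) / rho))
      with (mu + eps / rho * ((1 - 3 * eps) * mu) + eps ^ 2 * mu / rho)
      by (field; lra).
    lra.
  - apply Rmult_le_compat_l; [exact Hmu | apply exp_ineq1_le].
Qed.

Theorem lemma5p4
  (n m : nat) (tl hd : nat -> nat) (s t : nat)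
  (Htl : forall i, (i < m)%nat -> (tl i < n)%nat)
  (Hhd : forall i, (i < m)%nat -> (hd i < n)%nat)
  (Hs : (s < n)%nat) (Ht : (t < n)%nat) (Hst : s <> t)
  (u w : nat -> R)
  (Hu : forall i, (i < m)%nat -> 0 < u i)
  (Hw : forall i, (i < m)%nat -> 0 < w i)
  (eps rho F : R)
  (Heps0 : 0 < eps) (Heps1 : eps < 1/7) (Hrho : 0 < rho) (HF : 0 < F)
  (Reff : R)
  (HReff : is_Reff n m tl hd s t (fun i => w i / (u i)^2) Reff)
  (HR : Reff <= (1 - 7*eps) * sumE m w / F^2)
  (ft : nat -> R)
  (Hft : is_st_flow n m tl hd s t ft F)
  (HE : energy m (fun i => w i / (u i)^2) ft <= (1 + eps^2) * F^2 * Reff) :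
  let mu := sumE m w in
  let w' := fun i => w i + eps / rho * cong u ft i * w i
                     + eps^2 / (INR m * rho) * mu in
  sumE m w' <= mu * exp (eps * (1 - 2*eps) / rho).
Proof.
  intros mu w'.
  assert (Hw0 : forall i, (i < m)%nat -> 0 <= w i) by (intros i Hi; pose proof (Hw i Hi); lra).
  assert (Hmu : 0 <= mu) by (apply sumE_nonneg; exact Hw0).
  destruct m as [|m'].
  { unfold w', mu, sumE; simpl; lra. }
  assert (HF2 : 0 < F ^ 2) by (apply pow_lt; lra).
  assert (Henergy : sumE (S m') (fun i => w i * cong u ft i ^ 2)
                    <= (1 - 3 * eps) ^ 2 * mu).
  { rewrite <- energy_eq_weighted_cong_sq by exact Hu.
    pose proof (energy_factor_le_sq eps ltac:(lra)).
    assert (F ^ 2 * Reff <= (1 - 7 * eps) * mu)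
      by (unfold mu; apply (Rmult_le_compat_l (F ^ 2)) in HR; [field_simplify in HR|]; lra).
    nra. }
  assert (Hcong : sumE (S m') (fun i => cong u ft i * w i) <= (1 - 3 * eps) * mu).
  { rewrite (sumE_ext _ _ (fun i => w i * cong u ft i)) by (intros; ring).
    apply weighted_sum_le_of_weighted_sq_sum_le; [lra | exact Hw0 | exact Henergy]. }
  unfold w'; rewrite (sumE_ext _ _ (fun i => w i + eps / rho * cong u ft i * w i
                                            + eps ^ 2 * mu / rho / INR (S m')))
    by (intros; field; split; [lra | apply not_0_INR; lia]).
  rewrite sumE_reweight by lia.
  apply reweighted_total_le_exp; [exact Hmu | exact Heps0 | exact Hrho | exact Hcong].
Qed.
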